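(* Let $X$ be a shift space, $Y$ an irreducible shift space, and $\phi : X \to Y$ an open code which is bi-closing. Then $\phi$ is constant-to-one.
   Context: Shift spaces are closed shift-invariant subsets of $\mathcal{A}^{\mathbb{Z}}$; a code is a continuous shift-commuting map. Irreducible: for all words $u,v$ of $Y$ there is $w$ with $uwv$ a word of $Y$. Open: images of open sets are open. Constant-to-one: all fibers finite with cardinality independent of $y$. Bi-closing: never identifies two distinct left asymptotic points nor two distinct right asymptotic points, where $x,\bar x$ are left (right) asymptotic if $d(\sigma^{-n}x,\sigma^{-n}\bar x)\to0$ ($d(\sigma^{n}x,\sigma^{n}\bar x)\to0$), $d(x,\bar x)=2^{-k}$ with $k$ maximal such that $x_{[-k,k]}=\bar x_{[-k,k]}$. *)

From Stdlib Require Import ZArith List.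
From mathcomp Require Import all_boot.

Set Implicit Arguments.
Unset Strict Implicit.
Unset Printing Implicit Defensive.

Open Scope Z_scope.

Definition config (A : Type) := Z -> A.

Definition shift {A : Type} (x : config A) : config A := fun i => x (i + 1).

Definition shiftn {A : Type} (n : Z) (x : config A) : config A :=
  fun i => x (i + n).

(* x and y agree on [-k,k], i.e. d(x,y) <= 2^{-k}. *)
Definition agree {A : Type} (k : Z) (x y : config A) : Prop :=
  forall i, -k <= i <= k -> x i = y i.

(* Closed in the metric topology of A^Z: contains its limit points. *)
Definition closed_set {A : Type} (X : config A -> Prop) : Prop :=
  forall x, (forall k, exists y, X y /\ agree k x y) -> X x.

Definition shift_space {A : finType} (X : config A -> Prop) : Prop :=
  closed_set X /\ (forall x, X x <-> X (shift x)).

Definition is_word {A : Type} (X : config A -> Prop) (w : list A) : Prop :=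
  exists x, X x /\ exists i : Z,
    forall j : nat, (j < length w)%nat ->
      forall d, x (i + Z.of_nat j) = List.nth j w d.

Definition irreducible {A : Type} (X : config A -> Prop) : Prop :=
  forall u v, is_word X u -> is_word X v ->
    exists w, is_word X (u ++ w ++ v).

Definition code {A B : Type} (X : config A -> Prop) (Y : config B -> Prop)
  (phi : config A -> config B) : Prop :=
  (forall x, X x -> Y (phi x)) /\
  (forall x, X x -> forall k, exists m, forall x', X x' ->
      agree m x x' -> agree k (phi x) (phi x')) /\
  (forall x, X x -> phi (shift x) = shift (phi x)).

Definition rel_open {A : Type} (X U : config A -> Prop) : Prop :=
  (forall x, U x -> X x) /\
  (forall x, U x -> exists k, forall x', X x' -> agree k x x' -> U x').

Definition open_code {A B : Type} (X : config A -> Prop) (Y : config B -> Prop)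
  (phi : config A -> config B) : Prop :=
  forall U, rel_open X U -> rel_open Y (fun y => exists x, U x /\ phi x = y).

Definition left_asymptotic {A : Type} (x xb : config A) : Prop :=
  forall k, exists N : Z, forall n, N <= n ->
    agree k (shiftn (- n) x) (shiftn (- n) xb).

Definition right_asymptotic {A : Type} (x xb : config A) : Prop :=
  forall k, exists N : Z, forall n, N <= n ->
    agree k (shiftn n x) (shiftn n xb).

Definition bi_closing {A B : Type} (X : config A -> Prop)
  (phi : config A -> config B) : Prop :=
  forall x xb, X x -> X xb -> x <> xb ->
    (left_asymptotic x xb -> phi x <> phi xb) /\
    (right_asymptotic x xb -> phi x <> phi xb).

Definition constant_to_one {A B : Type} (X : config A -> Prop)
  (Y : config B -> Prop) (phi : config A -> config B) : Prop :=
  exists c : nat, forall y, Y y ->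
    exists s : list (config A), NoDup s /\ length s = c /\
      (forall x, (X x /\ phi x = y) <-> In x s).

From Stdlib Require Import ZArith List Lia.
From mathcomp Require Import all_boot zify boolp.

Set Implicit Arguments.
Unset Strict Implicit.
Unset Printing Implicit Defensive.

(* Bi-closing codes are finite-to-one in a uniform way: a compactness argument
   gives a window [-N, N] such that two points of a fiber agreeing on it agree
   everywhere, so the fiber over y is in bijection with the set of central
   (2N+1)-blocks of its points.  Openness of phi makes the number of these
   blocks lower semicontinuous in y, compactness of X makes it upper
   semicontinuous, and it is shift invariant.  Irreducibility of Y provides,
   for any y and y', a point close to y some shift of which is close to y', so
   the block count of y' is at most that of y, and by symmetry they agree. *)

Lemma agree_le (A : Type) (k k' : Z) (x y : config A) :
  k' <= k -> agree k x y -> agree k' x y.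
Proof. by move=> Hk H i Hi; apply: H; lia. Qed.

Lemma agree_sym (A : Type) (k : Z) (x y : config A) : agree k x y -> agree k y x.
Proof. by move=> H i Hi; rewrite H. Qed.

Lemma agree_trans (A : Type) (k : Z) (x y z : config A) :
  agree k x y -> agree k y z -> agree k x z.
Proof. by move=> H1 H2 i Hi; rewrite H1 // H2. Qed.

Definition frequently (Q : nat -> Prop) := forall n0, exists n, (n0 <= n)%N /\ Q n.

Lemma frequently_pigeonhole (T : finType) (Q : nat -> Prop) (f : nat -> T) :
  frequently Q -> exists t, frequently (fun n => Q n /\ f n = t).
Proof.
move=> HQ; apply: contrapT => /forallNP Hnot.
have Hbound t : exists n0, forall n, (n0 <= n)%N -> Q n -> f n <> t.
  apply: contrapT => /forallNP Hn; apply: (Hnot t) => n0.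
  apply: contrapT => /forallNP Hn0; apply: (Hn n0) => n Hn1 HQn Hf.
  by apply: (Hn0 n).
have [g Hg] := choice Hbound.
have [n [Hn HQn]] := HQ (\max_t g t).
by apply: (Hg (f n) n) => //; apply: leq_trans Hn; exact: leq_bigmax.
Qed.

Definition cluster_point (C : Type) (xs : nat -> config C) (p : config C) :=
  forall k, frequently (fun n => agree k p (xs n)).

Lemma frequently_agree_extend (C : finType) (xs : nat -> config C) k w :
  frequently (fun n => agree k w (xs n)) ->
  exists w', agree k w w' /\ frequently (fun n => agree (k + 1) w' (xs n)).
Proof.
move=> Hw.
have [[a b] Hab] := frequently_pigeonhole (fun n => (xs n (- (k + 1)), xs n (k + 1))) Hw.
exists (fun i => if Z.eq_dec i (- (k + 1)) then a
                 else if Z.eq_dec i (k + 1) then b else w i).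
split.
  by move=> i Hi; case: Z.eq_dec => ?; [lia | case: Z.eq_dec => ? //; lia].
move=> n0; have [n [Hn [Hag [= Ha Hb]]]] := Hab n0; exists n; split => // i Hi.
case: Z.eq_dec => [Ei|?]; first by subst i.
case: Z.eq_dec => [Ei|?]; first by subst i.
by apply: Hag; lia.
Qed.

Section KoenigChain.

Variables (C : finType) (xs : nat -> config C) (next : Z -> config C -> config C).
Hypothesis nextP : forall k w, frequently (fun n => agree k w (xs n)) ->
  agree k w (next k w) /\ frequently (fun n => agree (k + 1) (next k w) (xs n)).

Fixpoint chain (j : nat) : config C :=
  if j is j'.+1 then next (Z.of_nat j' - 1) (chain j') else xs 0%N.

Lemma chain_frequently j :
  frequently (fun n => agree (Z.of_nat j - 1) (chain j) (xs n)).
Proof.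
elim: j => [|j IH] n0; first by exists n0; split => // i; lia.
have [n [Hn Ha]] := proj2 (nextP IH) n0.
by exists n; split => //; apply: (agree_le _ Ha); lia.
Qed.

Lemma chain_agree j d : agree (Z.of_nat j - 1) (chain j) (chain (j + d)).
Proof.
elim: d => [|d IH]; first by rewrite addn0.
rewrite addnS; apply: agree_trans IH _.
by apply: (agree_le _ (proj1 (nextP (chain_frequently _)))); lia.
Qed.

Definition chain_limit : config C := fun i => chain (Z.to_nat (Z.abs i)).+1 i.

Lemma chain_limit_agree j : agree (Z.of_nat j - 1) chain_limit (chain j).
Proof.
move=> i Hi; rewrite /chain_limit.
have Hij : ((Z.to_nat (Z.abs i)).+1 <= j)%N by lia.
by rewrite -(subnKC Hij); apply: chain_agree; lia.
Qed.

Lemma chain_limit_cluster : cluster_point xs chain_limit.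
Proof.
move=> k n0; have [n [Hn Ha]] := chain_frequently (Z.to_nat (Z.abs k)).+1 n0.
exists n; split => //.
by apply: (agree_le _ (agree_trans (@chain_limit_agree _) Ha)); lia.
Qed.

End KoenigChain.

Lemma exists_cluster_point (C : finType) (xs : nat -> config C) :
  exists p, cluster_point xs p.
Proof.
have /choice [next nextP] : forall kw : Z * config C, exists w',
    frequently (fun n => agree kw.1 kw.2 (xs n)) ->
    agree kw.1 kw.2 w' /\ frequently (fun n => agree (kw.1 + 1) w' (xs n)).
  move=> [k w].
  case: (EM (frequently (fun n => agree k w (xs n)))) => [Hw|Hw]; last by exists w.
  by have [w' Hw'] := frequently_agree_extend Hw; exists w'.
exists (chain_limit xs (fun k w => next (k, w))).
by apply: chain_limit_cluster => k w; exact: (nextP (k, w)).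
Qed.

Lemma closed_cluster_point (C : Type) (X : config C -> Prop) (xs : nat -> config C) p :
  closed_set X -> (forall n, X (xs n)) -> cluster_point xs p -> X p.
Proof. by move=> HX Hxs Hp; apply: HX => k; have [n [_ Ha]] := Hp k 0%N; exists (xs n). Qed.

Lemma shiftnA (A : Type) m n (x : config A) : shiftn m (shiftn n x) = shiftn (m + n) x.
Proof. by apply: funext => i; rewrite /shiftn; f_equal; lia. Qed.

Lemma shiftn0 (A : Type) (x : config A) : shiftn 0 x = x.
Proof. by apply: funext => i; rewrite /shiftn Z.add_0_r. Qed.

Lemma shiftn_succ (A : Type) n (x : config A) : shiftn (Z.succ n) x = shift (shiftn n x).
Proof. by apply: funext => i; rewrite /shift /shiftn; f_equal; lia. Qed.

Lemma shift_inj (A : Type) : injective (@shift A).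
Proof.
move=> x y E; apply: funext => i.
by have := congr1 (fun z => z (i - 1)) E; rewrite /shift Z.sub_add.
Qed.

Section ShiftInvariance.

Variables (A B : Type) (X : config A -> Prop).
Hypothesis shiftX : forall x, X x <-> X (shift x).

Lemma shiftn_in x n : X x -> X (shiftn n x).
Proof.
move=> Hx; induction n as [|n IH|n IH] using Z.peano_ind; first by rewrite shiftn0.
  by rewrite shiftn_succ -shiftX.
by rewrite shiftX -shiftn_succ Z.succ_pred.
Qed.

Lemma shiftn_commute (phi : config A -> config B) :
  (forall x, X x -> phi (shift x) = shift (phi x)) ->
  forall x n, X x -> phi (shiftn n x) = shiftn n (phi x).
Proof.
move=> Hphi x n Hx.
induction n as [|n IH|n IH] using Z.peano_ind; first by rewrite !shiftn0.
  by rewrite !shiftn_succ Hphi ?IH //; exact: shiftn_in.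
apply: shift_inj; rewrite -Hphi; last exact: shiftn_in.
by rewrite -!shiftn_succ Z.succ_pred.
Qed.

End ShiftInvariance.

Definition fstc (A : Type) (z : config (A * A)) : config A := fun i => (z i).1.
Definition sndc (A : Type) (z : config (A * A)) : config A := fun i => (z i).2.

Lemma cluster_point_fstc (A : Type) (zs : nat -> config (A * A)) p :
  cluster_point zs p -> cluster_point (fun n => fstc (zs n)) (fstc p).
Proof.
by move=> Hp k n0; have [n [Hn Ha]] := Hp k n0; exists n; split => // i /Ha; rewrite /fstc => ->.
Qed.

Lemma cluster_point_sndc (A : Type) (zs : nat -> config (A * A)) p :
  cluster_point zs p -> cluster_point (fun n => sndc (zs n)) (sndc p).
Proof.
by move=> Hp k n0; have [n [Hn Ha]] := Hp k n0; exists n; split => // i /Ha; rewrite /sndc => ->.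
Qed.

Lemma uniform_threshold (T : finType) (P : T -> Z -> Prop) :
  (forall b, exists K, forall K', K <= K' -> P b K') -> exists K, forall b, P b K.
Proof.
move=> H.
suff [K HK] : exists K, forall b, b \in enum T -> forall K', K <= K' -> P b K'.
  by exists K => b; apply: (HK b _ K (Z.le_refl K)); rewrite mem_enum.
elim: (enum T) => [|a l [K IH]]; first by exists 0.
have [Ka Ha] := H a.
exists (Z.max K Ka) => b; rewrite in_cons => /orP [/eqP -> | Hb] K' HK'.
  by apply: Ha; lia.
by apply: IH => //; lia.
Qed.

Definition central_word (B : Type) (y : config B) (k : nat) : list B :=
  List.map (fun j : nat => y (Z.of_nat j - Z.of_nat k)) (List.seq 0 (k + k).+1).

Lemma central_word_length (B : Type) (y : config B) k :
  length (central_word y k) = (k + k).+1.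
Proof. by rewrite /central_word length_map length_seq. Qed.

Lemma central_word_nth (B : Type) (y : config B) k j d : (j < (k + k).+1)%N ->
  List.nth j (central_word y k) d = y (Z.of_nat j - Z.of_nat k).
Proof.
move=> Hj; rewrite /central_word (nth_indep _ d (y (0 - Z.of_nat k))); last first.
  by rewrite length_map length_seq; lia.
by rewrite (map_nth (fun j : nat => y (Z.of_nat j - Z.of_nat k)) _ 0%N j) seq_nth; last lia.
Qed.

Lemma central_word_is_word (B : Type) (Y : config B -> Prop) y k :
  Y y -> is_word Y (central_word y k).
Proof.
move=> Hy; exists y; split => //; exists (- Z.of_nat k) => j Hj d.
rewrite central_word_length in Hj; rewrite central_word_nth //; f_equal; lia.
Qed.

Lemma cat_app (T : Type) (s t : seq T) : s ++ t = (s ++ t)%list.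
Proof. by elim: s => //= a s ->. Qed.

Lemma irreducible_transition (B : Type) (Y : config B -> Prop) :
  (forall y, Y y <-> Y (shift y)) -> irreducible Y ->
  forall y y', Y y -> Y y' -> forall k K : nat, exists q, Y q /\
    agree (Z.of_nat k) y q /\ exists n, agree (Z.of_nat K) y' (shiftn n q).
Proof.
move=> shiftY irrY y y' Hy Hy' k K.
set u := central_word y k; set v := central_word y' K.
have [w [p [Hp [i0 Hi0]]]] := irrY u v (central_word_is_word k Hy) (central_word_is_word K Hy').
rewrite !cat_app in Hi0.
have Lu : length u = (k + k).+1 by exact: central_word_length.
have Lv : length v = (K + K).+1 by exact: central_word_length.
exists (shiftn (i0 + Z.of_nat k) p); split; first exact: shiftn_in.
split.
  move=> i Hi; rewrite /shiftn.
  set j := Z.to_nat (i + Z.of_nat k).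
  have Hj : (j < length (u ++ w ++ v)%list)%N by rewrite !length_app; lia.
  have := Hi0 j Hj (y 0); rewrite app_nth1; last lia.
  rewrite /u central_word_nth; last lia.
  have -> : i + (i0 + Z.of_nat k) = i0 + Z.of_nat j by lia.
  by move=> ->; f_equal; lia.
exists (Z.of_nat (length u + length w) + Z.of_nat K - Z.of_nat k) => i Hi; rewrite /shiftn.
set j := (length u + length w + Z.to_nat (i + Z.of_nat K))%N.
have Hj : (j < length (u ++ w ++ v)%list)%N by rewrite !length_app; lia.
have := Hi0 j Hj (y' 0); rewrite app_nth2; last lia.
rewrite app_nth2; last lia.
replace (j - length u - length w)%coq_nat with (Z.to_nat (i + Z.of_nat K)) by lia.
rewrite /v central_word_nth; last lia.
have -> : i + (Z.of_nat (length u + length w) + Z.of_nat K - Z.of_nat k) + (i0 + Z.of_nat k)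
  = i0 + Z.of_nat j by lia.
by move=> ->; f_equal; lia.
Qed.

Lemma In_mem (T : eqType) (x : T) (s : seq T) : List.In x s <-> x \in s.
Proof.
elim: s => [|a s IH] //=; rewrite in_cons; split.
  by case=> [->|/IH ->]; rewrite ?eqxx ?orbT.
by case/orP => [/eqP ->|/IH]; [left | right].
Qed.

Lemma uniq_NoDup (T : eqType) (s : seq T) : uniq s -> NoDup s.
Proof.
elim: s => [|a s IH] /=; first by constructor.
by case/andP => Ha Hs; constructor; [move/In_mem; apply/negP | exact: IH].
Qed.

Lemma length_size (T : Type) (s : seq T) : length s = size s.
Proof. by elim: s => //= a s ->. Qed.

Section Codes.

Variables (A B : finType) (X : config A -> Prop) (Y : config B -> Prop).
Variable phi : config A -> config B.
Hypotheses (shiftX : shift_space X) (codephi : code X Y phi).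

Lemma code_continuous x k :
  X x -> exists m, forall x', X x' -> agree m x x' -> agree k (phi x) (phi x').
Proof. by move=> Hx; case: codephi => _ [Hcont _]; exact: Hcont. Qed.

Lemma code_limit p y :
  X p -> (forall m, exists z, X z /\ agree m p z /\ agree m (phi z) y) -> phi p = y.
Proof.
move=> Hp Hnear; apply: funext => i.
have [m Hm] := code_continuous (Z.abs i) Hp.
have [z [Hz [Hpz Hzy]]] := Hnear (Z.max m (Z.abs i)).
rewrite (Hm z Hz (agree_le _ Hpz) i); try lia.
by apply: Hzy; lia.
Qed.

Lemma code_shiftn x n : X x -> phi (shiftn n x) = shiftn n (phi x).
Proof. by apply: shiftn_commute; [exact: (proj2 shiftX) | exact: (proj2 (proj2 codephi))]. Qed.

(* Pairs in a fiber are encoded as points of (A * A)^Z so that a single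
   cluster point controls both coordinates at once. *)
Lemma fiber_pairs_limit (W : nat -> Z -> Prop) :
  (forall n m i, (n <= m)%N -> W n i -> W m i) ->
  (forall n, exists x x', X x /\ X x' /\ phi x = phi x' /\ x 0 <> x' 0 /\
     forall i, W n i -> x i = x' i) ->
  exists u v, X u /\ X v /\ phi u = phi v /\ u 0 <> v 0 /\
     forall n i, W n i -> u i = v i.
Proof.
move=> window_mono Hpairs.
have /choice [zs Hzs] : forall n, exists z : config (A * A),
    X (fstc z) /\ X (sndc z) /\ phi (fstc z) = phi (sndc z) /\
    fstc z 0 <> sndc z 0 /\ forall i, W n i -> fstc z i = sndc z i.
  by move=> n; have [x [x' Hxx']] := Hpairs n; exists (fun i => (x i, x' i)).
have [p Hp] := exists_cluster_point zs.
have Hu : X (fstc p).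
  apply: closed_cluster_point (proj1 shiftX) _ (cluster_point_fstc Hp).
  by move=> n; have [] := Hzs n.
have Hv : X (sndc p).
  apply: closed_cluster_point (proj1 shiftX) _ (cluster_point_sndc Hp).
  by move=> n; have [_ []] := Hzs n.
exists (fstc p), (sndc p); do 2!split => //; split; last split.
- apply: code_limit Hu _ => m.
  have [mv Hmv] := code_continuous m Hv.
  have [n [_ Hn]] := Hp (Z.max m mv) 0%N.
  have [Hz [Hz' [Ezz' _]]] := Hzs n.
  exists (fstc (zs n)); split => //; split.
    by move=> i Hi; rewrite /fstc Hn //; lia.
  rewrite Ezz'; apply/agree_sym/Hmv => // i Hi; rewrite /sndc Hn //; lia.
- have [n [_ Hn]] := Hp 0 0%N; have [_ [_ [_ [Hn0 _]]]] := Hzs n.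
  by rewrite /fstc /sndc Hn //; lia.
- move=> n i Hni; have [m [Hnm Hm]] := Hp (Z.abs i) n.
  have [_ [_ [_ [_ Hmi]]]] := Hzs m.
  rewrite /fstc /sndc Hm; last lia.
  by apply: Hmi; exact: window_mono Hnm Hni.
Qed.

Hypothesis closingphi : bi_closing X phi.

Lemma closing_left_window : exists N : nat, forall x x', X x -> X x' ->
  phi x = phi x' -> (forall i, - Z.of_nat N <= i <= -1 -> x i = x' i) -> x 0 = x' 0.
Proof.
apply: contrapT => /forallNP noN.
have window_mono n m i : (n <= m)%N -> - Z.of_nat n <= i <= -1 -> - Z.of_nat m <= i <= -1.
  by lia.
have Hpairs n : exists x x', X x /\ X x' /\ phi x = phi x' /\ x 0 <> x' 0 /\
    forall i, - Z.of_nat n <= i <= -1 -> x i = x' i.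
  apply: contrapT => Hn; apply: (noN n) => x x' Hx Hx' Exx' Hw.
  by apply: contrapT => Hx0; apply: Hn; exists x, x'.
have [u [v [Hu [Hv [Euv [Huv0 Huv]]]]]] := fiber_pairs_limit window_mono Hpairs.
have Hasym : left_asymptotic u v.
  move=> k; exists (k + 1) => n Hn i Hi; rewrite /shiftn.
  by apply: (Huv (Z.to_nat (n - i))); lia.
by apply: (proj1 (closingphi Hu Hv _) Hasym Euv) => Euv'; apply: Huv0; rewrite Euv'.
Qed.

Lemma closing_right_window : exists N : nat, forall x x', X x -> X x' ->
  phi x = phi x' -> (forall i, 1 <= i <= Z.of_nat N -> x i = x' i) -> x 0 = x' 0.
Proof.
apply: contrapT => /forallNP noN.
have window_mono n m i : (n <= m)%N -> 1 <= i <= Z.of_nat n -> 1 <= i <= Z.of_nat m.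
  by lia.
have Hpairs n : exists x x', X x /\ X x' /\ phi x = phi x' /\ x 0 <> x' 0 /\
    forall i, 1 <= i <= Z.of_nat n -> x i = x' i.
  apply: contrapT => Hn; apply: (noN n) => x x' Hx Hx' Exx' Hw.
  by apply: contrapT => Hx0; apply: Hn; exists x, x'.
have [u [v [Hu [Hv [Euv [Huv0 Huv]]]]]] := fiber_pairs_limit window_mono Hpairs.
have Hasym : right_asymptotic u v.
  move=> k; exists (k + 1) => n Hn i Hi; rewrite /shiftn.
  by apply: (Huv (Z.to_nat (i + n))); lia.
by apply: (proj2 (closingphi Hu Hv _) Hasym Euv) => Euv'; apply: Huv0; rewrite Euv'.
Qed.

Definition window_injective (N : nat) := forall x x', X x -> X x' ->
  phi x = phi x' -> agree (Z.of_nat N) x x' -> x = x'.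

Lemma closing_window_injective : exists N, window_injective N.
Proof.
have [N HL] := closing_left_window; have [N' HR] := closing_right_window.
exists (maxn N N') => x x' Hx Hx' Exx' Hag.
have Hshift t : X (shiftn t x) /\ X (shiftn t x') /\ phi (shiftn t x) = phi (shiftn t x').
  rewrite !code_shiftn // Exx'.
  by split; [|split] => //; apply: (shiftn_in (proj2 shiftX)).
have Hall n : agree (Z.of_nat (maxn N N') + Z.of_nat n) x x'.
  elim: n => [|n IH]; first by apply: (agree_le _ Hag); lia.
  move=> i Hi; have [Hs [Hs' Es]] := Hshift i.
  case: (Z_le_gt_dec (Z.abs i) (Z.of_nat (maxn N N') + Z.of_nat n)) => Hin.
    by apply: IH; lia.
  case: (Z_le_gt_dec 0 i) => Hsign.
    by have := HL _ _ Hs Hs' Es; rewrite /shiftn /=; apply=> j Hj; apply: IH; lia.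
  by have := HR _ _ Hs Hs' Es; rewrite /shiftn /=; apply=> j Hj; apply: IH; lia.
by apply: funext => i; apply: (Hall (Z.to_nat (Z.abs i))); lia.
Qed.

Variable N : nat.

Definition central_block (x : config A) : {ffun 'I_(N + N).+1 -> A} :=
  [ffun i : 'I_(N + N).+1 => x (Z.of_nat i - Z.of_nat N)].

Lemma central_block_eq x x' :
  central_block x = central_block x' <-> agree (Z.of_nat N) x x'.
Proof.
split=> [Exx' i Hi | Hag].
  have Hi' : (Z.to_nat (i + Z.of_nat N) < (N + N).+1)%N by lia.
  have := congr1 (fun b : {ffun 'I_(N + N).+1 -> A} => b (Ordinal Hi')) Exx'.
  rewrite !ffunE /=.
  by have -> : Z.of_nat (Z.to_nat (i + Z.of_nat N)) - Z.of_nat N = i by lia.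
by apply/ffunP => j; rewrite !ffunE; apply: Hag; have := ltn_ord j; lia.
Qed.

Definition fiber_blocks y : {set {ffun 'I_(N + N).+1 -> A}} :=
  [set b | `[< exists x, X x /\ phi x = y /\ central_block x = b >]].

Lemma fiber_blocksP y b :
  reflect (exists x, X x /\ phi x = y /\ central_block x = b) (b \in fiber_blocks y).
Proof. by rewrite inE; exact: asboolP. Qed.

Lemma fiber_rep_ex y b :
  exists x, b \in fiber_blocks y -> X x /\ phi x = y /\ central_block x = b.
Proof. by case: (fiber_blocksP y b) => [[x Hx]|_]; [exists x | exists (fun _ => b ord0)]. Qed.

Definition fiber_rep y b : config A := sval (cid (fiber_rep_ex y b)).

Lemma fiber_repP y b : b \in fiber_blocks y ->
  X (fiber_rep y b) /\ phi (fiber_rep y b) = y /\ central_block (fiber_rep y b) = b.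
Proof. exact: svalP (cid (fiber_rep_ex y b)). Qed.

Lemma window_injective_block x x' : window_injective N -> X x -> X x' ->
  phi x = phi x' -> central_block x = central_block x' -> x = x'.
Proof. by move=> injN Hx Hx' Exx' /central_block_eq; exact: injN. Qed.

Lemma card_fiber_blocks_le_map y1 y2 (f : config A -> config A) :
  window_injective N ->
  (forall x, X x -> phi x = y1 -> X (f x) /\ phi (f x) = y2) ->
  (forall x x', X x -> X x' -> f x = f x' -> x = x') ->
  (#|fiber_blocks y1| <= #|fiber_blocks y2|)%N.
Proof.
move=> injN Hf finj.
pose h b := central_block (f (fiber_rep y1 b)).
have hinj : {in fiber_blocks y1 &, injective h}.
  move=> b b' /fiber_repP [Hx [Ex Bx]] /fiber_repP [Hx' [Ex' Bx']] Eh.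
  have [Hfx Efx] := Hf _ Hx Ex; have [Hfx' Efx'] := Hf _ Hx' Ex'.
  have Efr : f (fiber_rep y1 b) = f (fiber_rep y1 b').
    by apply: window_injective_block injN Hfx Hfx' _ Eh; rewrite Efx Efx'.
  by rewrite -Bx -Bx' (finj _ _ Hx Hx' Efr).
rewrite -(card_in_imset hinj); apply/subset_leq_card/subsetP => _ /imsetP [b Hb ->].
have [Hx [Ex _]] := fiber_repP Hb; have [Hfx Efx] := Hf _ Hx Ex.
by apply/fiber_blocksP; exists (f (fiber_rep y1 b)).
Qed.

Lemma card_fiber_blocks_shiftn y n : window_injective N ->
  (#|fiber_blocks (shiftn n y)| <= #|fiber_blocks y|)%N.
Proof.
move=> injN; apply: (card_fiber_blocks_le_map (f := shiftn (- n))) => //.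
  move=> x Hx Ex; split; first exact: (shiftn_in (proj2 shiftX)).
  by rewrite code_shiftn // Ex shiftnA Z.add_opp_diag_l shiftn0.
move=> x x' _ _ /(congr1 (shiftn n)).
by rewrite !shiftnA Z.add_opp_diag_r !shiftn0.
Qed.

Hypothesis openphi : open_code X Y phi.

Lemma fiber_blocks_lower y : exists K,
  forall y'', Y y'' -> agree K y y'' -> fiber_blocks y \subset fiber_blocks y''.
Proof.
have Hb b : exists K, forall K', K <= K' -> forall y'', Y y'' -> agree K' y y'' ->
    b \in fiber_blocks y -> b \in fiber_blocks y''.
  have [/fiber_blocksP [x [Hx [Ex Bx]]]|_] := boolP (b \in fiber_blocks y); last first.
    by exists 0.
  pose U x' := X x' /\ central_block x' = b.
  have openU : rel_open X U.
    split=> [z [] // | z [Hz Bz]].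
    exists (Z.of_nat N) => z' Hz' Ha; split => //.
    by rewrite -Bz; apply/central_block_eq/agree_sym.
  have [k Hk] := (openphi openU).2 y (ex_intro _ x (conj (conj Hx Bx) Ex)).
  exists k => K' HK y'' Hy'' Ha _.
  have [z [[Hz Bz] Ez]] := Hk y'' Hy'' (agree_le HK Ha).
  by apply/fiber_blocksP; exists z.
have [K HK] := uniform_threshold Hb.
by exists K => y'' Hy'' Ha; apply/subsetP => b; exact: HK.
Qed.

Lemma fiber_blocks_upper y : exists K,
  forall y'', agree K y y'' -> fiber_blocks y'' \subset fiber_blocks y.
Proof.
have Hb b : exists K, forall K', K <= K' -> forall y'', agree K' y y'' ->
    b \in fiber_blocks y'' -> b \in fiber_blocks y.
  have [_|Hb] := boolP (b \in fiber_blocks y); first by exists 0.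
  have [k Hk] : exists k, forall x, X x -> central_block x = b -> ~ agree k (phi x) y.
    apply: contrapT => /forallNP Hnot.
    have /choice [xs Hxs] : forall n : nat, exists x,
        X x /\ central_block x = b /\ agree (Z.of_nat n) (phi x) y.
      move=> n; apply: contrapT => Hn; apply: (Hnot (Z.of_nat n)) => x Hx Bx Ha.
      by apply: Hn; exists x.
    have [p Hp] := exists_cluster_point xs.
    have Xp : X p.
      apply: closed_cluster_point (proj1 shiftX) _ Hp.
      by move=> n; have [] := Hxs n.
    move/negP: Hb; apply; apply/fiber_blocksP; exists p; split => //; split.
      apply: code_limit Xp _ => m; have [n [Hn Ha]] := Hp m (Z.to_nat m).
      have [Hx [_ Hy]] := Hxs n; exists (xs n); split => //; split => //.
      by apply: (agree_le _ Hy); lia.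
    have [n [_ Ha]] := Hp (Z.of_nat N) 0%N; have [_ [Bx _]] := Hxs n.
    by rewrite -Bx; apply/central_block_eq.
  exists k => K' HK y'' Ha /fiber_blocksP [x [Hx [Ex Bx]]]; exfalso.
  by apply: (Hk x Hx Bx); rewrite Ex; apply: agree_sym (agree_le HK Ha).
have [K HK] := uniform_threshold Hb.
by exists K => y'' Ha; apply/subsetP => b; exact: HK.
Qed.

Hypotheses (shiftY : shift_space Y) (irrY : irreducible Y).

Lemma card_fiber_blocks_le y y' : window_injective N -> Y y -> Y y' ->
  (#|fiber_blocks y'| <= #|fiber_blocks y|)%N.
Proof.
move=> injN Hy Hy'.
have [K' HK'] := fiber_blocks_lower y'.
have [K HK] := fiber_blocks_upper y.
have [q [Hq [Hyq [n Hy'q]]]] :=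
  irreducible_transition (proj2 shiftY) irrY Hy Hy' (Z.to_nat K) (Z.to_nat K').
have Sy' : fiber_blocks y' \subset fiber_blocks (shiftn n q).
  apply: HK'; first exact: (shiftn_in (proj2 shiftY)).
  by apply: (agree_le _ Hy'q); lia.
have Sy : fiber_blocks q \subset fiber_blocks y.
  by apply: HK; apply: (agree_le _ Hyq); lia.
apply: leq_trans (subset_leq_card Sy') _.
exact: leq_trans (card_fiber_blocks_shiftn q n injN) (subset_leq_card Sy).
Qed.

Lemma fiber_enumeration y : window_injective N -> exists s : list (config A),
  NoDup s /\ length s = #|fiber_blocks y| /\ forall x, X x /\ phi x = y <-> In x s.
Proof.
move=> injN; exists (List.map (fiber_rep y) (enum (fiber_blocks y))); split; [|split].
- apply: NoDup_map_NoDup_ForallPairs; last exact/uniq_NoDup/enum_uniq.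
  move=> b b' /In_mem Hb /In_mem Hb' E; rewrite !mem_enum in Hb Hb'.
  by have [_ [_ <-]] := fiber_repP Hb; have [_ [_ <-]] := fiber_repP Hb'; rewrite E.
- by rewrite length_map length_size -cardE.
- move=> x; split=> [[Hx Ex] | /in_map_iff [b [<- /In_mem]]]; last first.
    by rewrite mem_enum => /fiber_repP [? [? _]].
  have Hb : central_block x \in fiber_blocks y by apply/fiber_blocksP; exists x.
  have [Hr [Er Br]] := fiber_repP Hb.
  apply/in_map_iff; exists (central_block x); split; last by apply/In_mem; rewrite mem_enum.
  by apply: window_injective_block injN Hr Hx _ Br; rewrite Er.
Qed.

End Codes.

Theorem corollary2p9 (A B : finType) (X : config A -> Prop) (Y : config B -> Prop)
  (phi : config A -> config B) :
  shift_space X -> shift_space Y -> irreducible Y ->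
  code X Y phi -> open_code X Y phi -> bi_closing X phi ->
  constant_to_one X Y phi.
Proof.
move=> shiftX shiftY irrY codephi openphi closingphi.
have [N injN] := closing_window_injective shiftX codephi closingphi.
have [[y0 Hy0]|noY] := EM (exists y0, Y y0); last first.
  by exists 0%N => y Hy; exfalso; apply: noY; exists y.
exists #|fiber_blocks X phi N y0| => y Hy.
have [s [Hs [Ls Fs]]] := fiber_enumeration y injN.
exists s; split => //; split => //; rewrite Ls; apply/eqP.
by rewrite eqn_leq !(card_fiber_blocks_le shiftX codephi openphi shiftY irrY).
Qed.
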